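(* Let $L>0$, $N\ge 1$, let $v_\textup{d}>0$ be a constant, and let $K:\mathbb{R}\to\mathbb{R}$ satisfy the following: the support of $K$ is $[0,R]$ with $0<R<L$; $K\in C^2(0,R)$ with $K,K''\in L^\infty(0,R)$; $K(z)>0$ and $K'(z)<0$ for $z\in(0,R)$; $K(0)=K(R)=0$ and $K(0^+):=\lim_{z\to0^+}K(z)>0$. Consider $N$ pedestrians on the periodic domain $[0,L)$ (positions taken modulo $L$) with positions $X^1_t,\dots,X^N_t$ evolving by \[ \dot X^i_t=v_\textup{d}-\sum_{j=1}^N K(X^j_t-X^i_t),\qquad i=1,\dots,N, \] where each difference $X^j_t-X^i_t$ is taken modulo $L$ in $[0,L)$. Let $\bar X^1<\dots<\bar X^N$ (modulo $L$) be an equispaced lattice, i.e. $|\bar X^j-\bar X^i|=(j-i)L/N$, and set $X^i_t=\bar X^i+wt$. Then this translating equispaced lattice is a stable solution of the system (with respect to small perturbations of the positions, in the linearized sense) for \[ w=v_\textup{d}-\sum_{h=1}^{N-1}K\!\left(h\frac{L}{N}\right). \] Moreover, if $R>L/N$, it is also attractive (small perturbations, modulo rigid translations of the whole lattice, decay to zero).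
   Context: The lattice configuration corresponds to the discrete measure $\epsilon_t=\sum_{i=1}^N\delta_{X^i_t}$, which is a translation $\epsilon_t(x)=\bar\epsilon(x-wt)$ of the equispaced configuration. *)

From HB Require Import structures.
From mathcomp Require Import all_boot all_order all_algebra.
From mathcomp Require Import all_classical all_reals all_analysis.
Set Implicit Arguments. Unset Strict Implicit. Unset Printing Implicit Defensive.
Import Order.TTheory GRing.Theory Num.Theory.
Import numFieldNormedType.Exports.
Local Open Scope ring_scope.
Local Open Scope classical_set_scope.

Definition pmod {R : realType} (L x : R) : R :=
  x - (Num.floor (x / L))%:~R * L.

(* coefficient K'(z) of the linearization, for z = (X^j - X^i) mod L in [0,L).
   For R < z, K vanishes near z so K'(z) = 0 genuinely; the point z = R
   (where K may jump) is given the convention K'(R) := 0. *)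
Definition lin_coef {R : realType} (K : R -> R) (Rk z : R) : R :=
  if z < Rk then derive1 K z else 0.

Definition ped_rhs {R : realType} (N : nat) (L vd : R) (K : R -> R)
  (X : 'I_N -> R) (i : 'I_N) : R :=
  vd - \sum_(j < N) K (pmod L (X j - X i)).

Definition lin_rhs {R : realType} (N : nat) (L : R) (K : R -> R) (Rk : R)
  (Xbar : 'I_N -> R) (x : 'I_N -> R) (i : 'I_N) : R :=
  - \sum_(j < N) lin_coef K Rk (pmod L (Xbar j - Xbar i)) * (x j - x i).

Definition lin_solution {R : realType} (N : nat) (L : R) (K : R -> R) (Rk : R)
  (Xbar : 'I_N -> R) (x : 'I_N -> R -> R) : Prop :=
  forall (i : 'I_N) (t : R),
    is_derive t 1 (x i) (lin_rhs L K Rk Xbar (fun j => x j t) i).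

Definition lin_stable {R : realType} (N : nat) (L : R) (K : R -> R) (Rk : R)
  (Xbar : 'I_N -> R) : Prop :=
  forall eps : R, 0 < eps -> exists2 delta : R, 0 < delta &
    forall x : 'I_N -> R -> R, lin_solution L K Rk Xbar x ->
      (forall i, `|x i 0| < delta) ->
      forall t : R, 0 <= t -> forall i, `|x i t| < eps.

(* attractivity modulo rigid translations: every perturbation converges to a
   rigid translation c (1,...,1) of the lattice *)
Definition lin_attractive {R : realType} (N : nat) (L : R) (K : R -> R) (Rk : R)
  (Xbar : 'I_N -> R) : Prop :=
  forall x : 'I_N -> R -> R, lin_solution L K Rk Xbar x ->
    exists c : R, forall i, x i t @[t --> +oo] --> c.

From HB Require Import structures.
From mathcomp Require Import all_boot all_order all_algebra.
From mathcomp Require Import all_classical all_reals all_analysis.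
Import Order.TTheory GRing.Theory Num.Theory.
Import numFieldNormedType.Exports.
Local Open Scope ring_scope.
Local Open Scope classical_set_scope.
From mathcomp Require Import zify ring lra.

Set Implicit Arguments. Unset Strict Implicit.

(* On the translating lattice every pedestrian sees the same neighbours at the
   distances h L / N, which gives the speed w. Linearized around the lattice,
   a perturbation x evolves by a Laplacian flow x_i' = sum_j a_ij (x_j - x_i)
   with circulant weights a_ij = -K'(d(i, j) L / N) >= 0, d the cyclic distance.
   Circulant weights are balanced (row sums equal column sums), so sum_i x_i is
   conserved and, for every constant m, V = sum_i (x_i - m)^2 decreases at the
   rate of the Dirichlet form Q = sum_ij a_ij (x_j - x_i)^2 >= 0; with m = 0
   this is stability. If R > L / N, consecutive pedestrians are coupled with
   weight -K'(L / N) > 0, and a discrete Poincare inequality along the path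
   0, 1, ..., N - 1 gives Q >= lam V for m the mean of x; hence V -> 0 and the
   perturbation converges to the rigid translation by that mean. *)

Section RealFacts.
Context {R : realType}.

Lemma ler_sum_term (I : finType) (F : I -> R) (i : I) :
  (forall j, 0 <= F j) -> F i <= \sum_j F j.
Proof. by move=> F_ge0; rewrite (bigD1 i) //= lerDl sumr_ge0. Qed.

Lemma is_derive_sum_pointwise (n : nat) (F : 'I_n -> R -> R) (dF : 'I_n -> R) (t : R) :
  (forall i, is_derive t (1 : R) (F i) (dF i)) ->
  is_derive t (1 : R) (fun s => \sum_i F i s) (\sum_i dF i).
Proof. by move/is_derive_sum; rewrite fct_sumE. Qed.

Lemma MVT_segment_everywhere (f df : R -> R) (s t : R) :
  (forall u, is_derive u (1 : R) f (df u)) -> s <= t ->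
  exists2 c, c \in `[s, t]%R & f t - f s = df c * (t - s).
Proof.
move=> f_df st; apply: MVT_segment st (fun z _ => f_df z) _.
by apply: derivable_within_continuous => z _; have := f_df z => /(@ex_derive _ _ _ _ _ _ _).
Qed.

Lemma derive_le0_nonincreasing (f df : R -> R) :
  (forall t, is_derive t (1 : R) f (df t)) -> (forall t, df t <= 0) ->
  {homo f : s t /~ s <= t}.
Proof.
move=> f_df df_le0 t s st; have [c _ f_mvt] := MVT_segment_everywhere f_df st.
by rewrite -subr_le0 f_mvt; apply: mulr_le0_ge0; rewrite ?subr_ge0.
Qed.

(* The mean value theorem turns [f' <= - lam f] into the algebraic decay
   bound [f t * (1 + lam t) <= f 0], which avoids exponentials. *)
Lemma derive_le_linear_decay (f df : R -> R) (lam : R) : 0 < lam ->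
  (forall t, is_derive t (1 : R) f (df t)) -> (forall t, 0 <= f t) ->
  (forall t, df t <= - (lam * f t)) -> f t @[t --> +oo] --> 0.
Proof.
move=> lam_gt0 f_df f_ge0 df_le.
have df_le0 t : df t <= 0.
  by apply: le_trans (df_le t) _; rewrite oppr_le0 mulr_ge0 // ltW.
have f_nonincr := derive_le0_nonincreasing f_df df_le0.
have decay t : 0 <= t -> f t * (1 + lam * t) <= f 0.
  move=> t_ge0; have [c] := MVT_segment_everywhere f_df t_ge0.
  rewrite in_itv /= subr0 => /andP[c_ge0 c_le_t] f_mvt.
  have dfc_t : df c * t <= - (lam * f c) * t by rewrite ler_wpM2r.
  have : lam * f t * t <= lam * f c * t.
    by rewrite ler_wpM2r // ler_wpM2l ?(ltW lam_gt0) //; exact: f_nonincr.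
  lra.
apply/cvgrPdist_lt => e e_gt0.
exists (f 0 / (lam * e)); split; first exact: num_real.
move=> t t_gt.
have t_gt0 : 0 < t by rewrite (le_lt_trans _ t_gt) // divr_ge0 // ltW ?mulr_gt0.
rewrite ltr_pdivrMr ?mulr_gt0 // in t_gt.
rewrite sub0r normrN ger0_norm // -(ltr_pM2r (mulr_gt0 lam_gt0 t_gt0)).
by have := decay t (ltW t_gt0); have := f_ge0 t; nra.
Qed.

End RealFacts.

Section PathPoincare.
Context {R : realType}.

Lemma sqr_sum_le_pow4 (n : nat) (w : nat -> R) (B : R) : 0 <= B ->
  (forall k, (k < n)%N -> w k ^+ 2 <= B) -> (\sum_(k < n) w k) ^+ 2 <= 4 ^+ n * B.
Proof.
move=> B_ge0; elim: n => [|n IHn] w_le; first by rewrite big_ord0 expr0n mul1r.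
rewrite big_ord_recr /= [4 ^+ _.+1]exprS -mulrA.
have s_le := IHn (fun k k_lt => w_le k (ltnW k_lt)).
have wn_le := w_le n (ltnSn n).
have B_le : B <= 4 ^+ n * B by apply: ler_peMl => //; apply: exprn_ege1; lra.
set s := \sum_(k < n) w k in s_le *.
have := sqr_ge0 (s - w n); lra.
Qed.

Definition path_energy (n : nat) (z : nat -> R) := \sum_(e < n) (z e.+1 - z e) ^+ 2.

Section PathEnergy.
Variables (n : nat) (z : nat -> R).
Local Notation D := (path_energy n z).

Lemma path_energy_ge0 : 0 <= D.
Proof. by apply: sumr_ge0 => e _; exact: sqr_ge0. Qed.

Lemma sqr_sub_le_path_energy k l : (k <= n)%N -> (l <= n)%N ->
  (z l - z k) ^+ 2 <= 4 ^+ n * D.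
Proof.
wlog kl : k l / (k <= l)%N.
  move=> le_case k_le l_le; case: (leqP k l) => [kl|lk]; first exact: le_case.
  by rewrite -sqrrN opprB le_case // ltnW.
move=> _ l_le.
rewrite -(telescope_sumr z kl) -{1}(add0n k) big_addn big_mkord.
apply: le_trans (@sqr_sum_le_pow4 (l - k) (fun e => z (e + k).+1 - z (e + k)) _
                   path_energy_ge0 _) _.
  move=> e e_lt; have ek_lt : (e + k < n)%N by lia.
  rewrite /path_energy; apply: (ler_sum_term (Ordinal ek_lt)).
  by move=> j; exact: sqr_ge0.
rewrite ler_wpM2r ?path_energy_ge0 //; apply: ler_weXn2l; first lra.
exact: leq_trans (leq_subr k l) l_le.
Qed.

Lemma sum_sqr_dev_le_path_energy (m : R) : \sum_(k < n.+1) z k = n.+1%:R * m ->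
  \sum_(k < n.+1) (z k - m) ^+ 2 <= n.+1%:R * (4 ^+ n.+1 * 4 ^+ n) * D.
Proof.
move=> z_mean.
have dev_le (i : 'I_n.+1) : (z i - m) ^+ 2 <= 4 ^+ n.+1 * 4 ^+ n * D.
  have dev_sum : n.+1%:R * (z i - m) = \sum_(k < n.+1) (z i - z k).
    by rewrite sumrB sumr_const card_ord z_mean -mulr_natl; ring.
  have sum_le : (n.+1%:R * (z i - m)) ^+ 2 <= 4 ^+ n.+1 * (4 ^+ n * D).
    rewrite dev_sum; apply: (@sqr_sum_le_pow4 n.+1 (fun k => z i - z k)).
      by rewrite mulr_ge0 ?exprn_ge0 ?path_energy_ge0.
    move=> k k_lt; rewrite -sqrrN opprB.
    by apply: sqr_sub_le_path_energy; rewrite -ltnS.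
  rewrite -mulrA; apply: le_trans sum_le.
  by rewrite exprMn; apply: ler_peMl; rewrite ?sqr_ge0 // exprn_ege1 // ler1n.
apply: le_trans (ler_sum _ (fun i _ => dev_le i)) _.
by rewrite sumr_const card_ord -[leRHS]mulrA [leRHS]mulr_natl.
Qed.

End PathEnergy.

End PathPoincare.

Section CyclicDistance.
Variable n : nat.

Definition cyc_dist (i j : 'I_n.+1) : nat :=
  if (i <= j)%N then (j - i)%N else (j + n.+1 - i)%N.

Lemma cyc_dist_lt i j : (cyc_dist i j < n.+1)%N.
Proof. by rewrite /cyc_dist; have := ltn_ord i; have := ltn_ord j; case: ifP; lia. Qed.

Lemma cyc_dist_inj_r i : injective (fun j => Ordinal (cyc_dist_lt i j)).
Proof.
move=> j1 j2 /(congr1 val); rewrite /= /cyc_dist => eq_d; apply/val_inj => /=.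
by move: eq_d; have := ltn_ord i; have := ltn_ord j1; have := ltn_ord j2; do 2 case: ifP; lia.
Qed.

Lemma cyc_dist_inj_l j : injective (fun i => Ordinal (cyc_dist_lt i j)).
Proof.
move=> i1 i2 /(congr1 val); rewrite /= /cyc_dist => eq_d; apply/val_inj => /=.
by move: eq_d; have := ltn_ord j; have := ltn_ord i1; have := ltn_ord i2; do 2 case: ifP; lia.
Qed.

Lemma sum_cyc_dist_r (V : nmodType) (F : nat -> V) i :
  \sum_j F (cyc_dist i j) = \sum_(h < n.+1) F h.
Proof. by rewrite [RHS](reindex_inj (@cyc_dist_inj_r i)). Qed.

Lemma sum_cyc_dist_l (V : nmodType) (F : nat -> V) j :
  \sum_i F (cyc_dist i j) = \sum_(h < n.+1) F h.
Proof. by rewrite [RHS](reindex_inj (@cyc_dist_inj_l j)). Qed.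

Lemma cyc_dist_eq0 i j : cyc_dist i j = 0%N -> i = j.
Proof.
rewrite /cyc_dist => d0; apply/val_inj => /=; move: d0.
by have := ltn_ord i; have := ltn_ord j; case: ifP; lia.
Qed.

Lemma cyc_dist_succ (i : 'I_n.+1) : (i < n)%N -> cyc_dist i (inord i.+1) = 1%N.
Proof. by move=> i_lt; rewrite /cyc_dist inordK; [case: ifP; lia | lia]. Qed.

End CyclicDistance.

Section BalancedLaplacian.
Variables (R : realType) (N : nat) (a : 'I_N -> 'I_N -> R).

Definition laplacian_flow (x : 'I_N -> R -> R) :=
  forall i t, is_derive t (1 : R) (x i) (\sum_j a i j * (x j t - x i t)).

Definition dirichlet_form (y : 'I_N -> R) := \sum_i \sum_j a i j * (y j - y i) ^+ 2.

Hypothesis a_ge0 : forall i j, 0 <= a i j.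
Hypothesis a_balanced : forall k, \sum_i a i k = \sum_j a k j.

Lemma dirichlet_form_ge0 y : 0 <= dirichlet_form y.
Proof. by apply: sumr_ge0 => i _; apply: sumr_ge0 => j _; rewrite mulr_ge0 ?sqr_ge0. Qed.

Lemma balanced_double_sum (f : 'I_N -> R) :
  \sum_i \sum_j a i j * f j = \sum_i \sum_j a i j * f i.
Proof.
rewrite exchange_big; apply: eq_bigr => k _.
by rewrite -!mulr_suml a_balanced.
Qed.

Section Flow.
Variable x : 'I_N -> R -> R.
Hypothesis x_flow : laplacian_flow x.

Lemma laplacian_flow_sum_const s t : \sum_i x i s = \sum_i x i t.
Proof.
apply: (@is_derive_0_is_cst _ (fun s => \sum_i x i s)) => {}t.
apply: is_derive_eq (is_derive_sum_pointwise (fun i => x_flow i t)) _.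
under eq_bigr do under eq_bigr do rewrite mulrBr.
by under eq_bigr do rewrite sumrB; rewrite sumrB balanced_double_sum subrr.
Qed.

Lemma laplacian_flow_sqdev_derive m t :
  is_derive t (1 : R) (fun s => \sum_i (x i s - m) ^+ 2)
    (- dirichlet_form (fun i => x i t)).
Proof.
(* unfolded, [x_flow] becomes visible to instance resolution of [is_derive] *)
have x_df := x_flow; rewrite /laplacian_flow in x_df.
apply: is_derive_eq; first exact: (is_derive_sum_pointwise (F := fun i s => (x i s - m) ^+ 2)).
rewrite /dirichlet_form -sumrN.
transitivity (\sum_i \sum_j (a i j * (x j t - m) ^+ 2 - a i j * (x i t - m) ^+ 2
                              - a i j * (x j t - x i t) ^+ 2)).
  apply: eq_bigr => i _; rewrite subr0 -scalerDl scaler_sumr.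
  by apply: eq_bigr => j _; rewrite /GRing.scale /=; ring.
under eq_bigr do rewrite !sumrB.
by rewrite !sumrB balanced_double_sum subrr sub0r sumrN.
Qed.

Lemma laplacian_flow_sqdev_nonincreasing m :
  {homo (fun s => \sum_i (x i s - m) ^+ 2) : s t /~ s <= t}.
Proof.
apply: derive_le0_nonincreasing (laplacian_flow_sqdev_derive m) _ => t.
by rewrite oppr_le0 dirichlet_form_ge0.
Qed.

End Flow.

Lemma laplacian_flow_stable (eps : R) : 0 < eps -> exists2 delta : R, 0 < delta &
  forall x, laplacian_flow x -> (forall i, `|x i 0| < delta) ->
    forall t, 0 <= t -> forall i, `|x i t| < eps.
Proof.
move=> eps_gt0; set k : R := N%:R.
have k1_gt0 : 0 < k + 1 by rewrite ltr_wpDl ?ler0n.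
exists (eps / (k + 1)); first by rewrite divr_gt0.
move=> x x_flow x0_lt t t_ge0 i.
set d := eps / (k + 1) in x0_lt.
have eps_eq : eps = d * (k + 1) by rewrite /d divfK ?gt_eqF.
have sq_le := laplacian_flow_sqdev_nonincreasing x_flow 0 t_ge0.
rewrite /= in sq_le.
have xit_le : x i t ^+ 2 <= \sum_j (x j t - 0) ^+ 2.
  by rewrite -(subr0 (x i t)); apply: (ler_sum_term i) => j; exact: sqr_ge0.
have x0_le : \sum_j (x j 0 - 0) ^+ 2 <= k * d ^+ 2.
  rewrite /k mulr_natl -[X in _ *+ X](card_ord N) -sumr_const; apply: ler_sum => j _.
  rewrite subr0 -real_normK ?num_real //.
  by have := x0_lt j; have := normr_ge0 (x j 0); nra.
have d_gt0 : 0 < d by rewrite divr_gt0.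
have : `|x i t| ^+ 2 < eps ^+ 2.
  rewrite real_normK ?num_real // eps_eq.
  have k_ge0 : 0 <= k by rewrite ler0n.
  have := le_trans xit_le (le_trans sq_le x0_le); nra.
by have := normr_ge0 (x i t); nra.
Qed.

End BalancedLaplacian.

Section PathConnectedConsensus.
Variables (R : realType) (n : nat) (a : 'I_n.+1 -> 'I_n.+1 -> R) (al : R).
Hypothesis a_ge0 : forall i j, 0 <= a i j.
Hypothesis a_balanced : forall k, \sum_i a i k = \sum_j a k j.
Hypothesis al_gt0 : 0 < al.
Hypothesis a_path : forall i : 'I_n.+1, (i < n)%N -> al <= a i (inord i.+1).

Lemma dirichlet_form_ge_path_energy (y : 'I_n.+1 -> R) :
  al * path_energy n (fun k => y (inord k)) <= dirichlet_form a y.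
Proof.
have term_le (i : 'I_n.+1) :
    (if (i < n)%N then al * (y (inord i.+1) - y (inord i)) ^+ 2 else 0)
      <= \sum_j a i j * (y j - y i) ^+ 2.
  case: ifP => i_lt; last by apply: sumr_ge0 => j _; rewrite mulr_ge0 ?sqr_ge0.
  apply: le_trans (ler_sum_term (inord i.+1) _); last by move=> j; rewrite mulr_ge0 ?sqr_ge0.
  by rewrite inord_val ler_wpM2r ?sqr_ge0 ?a_path.
apply: le_trans (ler_sum _ (fun i _ => term_le i)).
rewrite big_ord_recr /= ltnn addr0 /path_energy mulr_sumr.
by under [X in _ <= X]eq_bigr => i _ do rewrite ltn_ord.
Qed.

Lemma laplacian_flow_consensus (x : 'I_n.+1 -> R -> R) : laplacian_flow a x ->
  exists c : R, forall i, x i t @[t --> +oo] --> c.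
Proof.
move=> x_flow.
pose m := (\sum_i x i 0) / n.+1%:R.
pose V s := \sum_i (x i s - m) ^+ 2.
pose C : R := n.+1%:R * (4 ^+ n.+1 * 4 ^+ n).
have C_gt0 : 0 < C by rewrite mulr_gt0 ?ltr0n // mulr_gt0 // exprn_gt0.
have V_ge0 s : 0 <= V s by apply: sumr_ge0 => i _; exact: sqr_ge0.
have V_le s : al * V s <= C * dirichlet_form a (fun i => x i s).
  have z_mean : \sum_(k < n.+1) x (inord k) s = n.+1%:R * m.
    under eq_bigr do rewrite inord_val.
    by rewrite (laplacian_flow_sum_const a_balanced x_flow s 0) /m mulrC divfK ?pnatr_eq0.
  have V_le_energy : V s <= C * path_energy n (fun k => x (inord k) s).
    have := sum_sqr_dev_le_path_energy (z := fun k => x (inord k) s) z_mean.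
    by under eq_bigr do rewrite inord_val.
  have energy_le := dirichlet_form_ge_path_energy (fun i => x i s).
  have := ler_wpM2l (ltW al_gt0) V_le_energy.
  have := ler_wpM2l (ltW C_gt0) energy_le.
  lra.
have V_to0 : V t @[t --> +oo] --> 0.
  apply: (derive_le_linear_decay (lam := al / C))
           (laplacian_flow_sqdev_derive a_balanced x_flow m) _ _.
  - by rewrite divr_gt0.
  - exact: V_ge0.
  - by move=> t; rewrite lerN2 mulrAC ler_pdivrMr //; have := V_le t; rewrite /V; lra.
exists m => i; apply/cvgrPdist_lt => e e_gt0.
move/cvgrPdist_lt: V_to0 => /(_ (e ^+ 2) (exprn_gt0 2 e_gt0)).
apply: filterS => t; rewrite sub0r normrN ger0_norm // => V_lt.
have dev_le : (x i t - m) ^+ 2 <= V t by apply: (ler_sum_term i) => j; exact: sqr_ge0.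
have : `|m - x i t| ^+ 2 < e ^+ 2 by rewrite distrC real_normK ?num_real // (le_lt_trans dev_le).
by have := normr_ge0 (m - x i t); nra.
Qed.

End PathConnectedConsensus.

Section EquispacedLattice.
Variables (R : realType) (n : nat) (L : R) (Xbar : 'I_n.+1 -> R).
Hypothesis L_gt0 : 0 < L.
Hypothesis Xbar_lattice : forall i j : 'I_n.+1,
  Xbar j - Xbar i = ((j : int) - (i : int))%:~R * (L / n.+1%:R).
Local Notation c := (L / n.+1%:R).

Lemma pmod_lattice i j : pmod L (Xbar j - Xbar i) = (cyc_dist i j)%:R * c.
Proof.
have n1_gt0 : 0 < (n.+1%:R : R) by rewrite ltr0n.
have i_lt := ltn_ord i; have j_lt := ltn_ord j.
have scale_div a : a * c / L = a / n.+1%:R by field; rewrite !gt_eqF.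
rewrite Xbar_lattice /pmod rmorphB /= scale_div /cyc_dist.
case: ifP => ij.
- have -> : Num.floor ((j%:R - i%:R) / (n.+1%:R : R)) = 0.
    apply: floor_def; rewrite add0r /= mulr0z mulr1z.
    rewrite divr_ge0 ?subr_ge0 ?ler_nat //=.
    by rewrite ltr_pdivrMr // mul1r ltrBlDr -natrD ltr_nat; lia.
  by rewrite mul0r subr0 natrB.
- have -> : Num.floor ((j%:R - i%:R) / (n.+1%:R : R)) = -1.
    apply: floor_def; rewrite /= addNr mulr0z.
    rewrite ler_pdivlMr // ltr_pdivrMr // mul0r mulN1r lerBrDl subr_lt0 ltr_nat.
    by rewrite lerBlDr -natrD ler_nat; apply/andP; split; lia.
  rewrite natrB; last lia.
  by rewrite natrD; field; rewrite gt_eqF.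
Qed.

Lemma lattice_translation_solution (vd : R) (K : R -> R) : K 0 = 0 ->
  let w := vd - \sum_(1 <= h < n.+1) K (h%:R * c) in
  forall i t, is_derive t (1 : R) (fun s => Xbar i + w * s)
                (ped_rhs L vd K (fun j => Xbar j + w * t) i).
Proof.
move=> K0 w i t.
have -> : ped_rhs L vd K (fun j => Xbar j + w * t) i = w.
  rewrite /ped_rhs /w; congr (_ - _).
  transitivity (\sum_j K ((cyc_dist i j)%:R * c)).
    by apply: eq_bigr => j _; rewrite -pmod_lattice; congr (K (pmod L _)); ring.
  rewrite (sum_cyc_dist_r (fun h => K (h%:R * c))) -(big_mkord xpredT (fun h => K (h%:R * c))).
  by rewrite big_ltn // mul0r K0 add0r.
eapply is_derive_eq; first typeclasses eauto.
by rewrite add0r mul1r; exact: mulr1.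
Qed.

Variables (K : R -> R) (Rk : R).

(* The diagonal weight multiplies [x i - x i] and never matters; setting it to
   [0] keeps every weight nonnegative, whereas [lin_coef K Rk 0 = K'(0)] has no
   sign. *)
Definition lattice_weight (h : nat) : R :=
  if h == 0%N then 0 else - lin_coef K Rk (h%:R * c).

Lemma lattice_weight_ge0 : {in `]0, Rk[, forall z, derive1 K z < 0} ->
  forall h, 0 <= lattice_weight h.
Proof.
move=> K'_lt0 h; rewrite /lattice_weight /lin_coef; case: eqP => // /eqP h_neq0.
case: ifP => hc_lt; last by rewrite oppr0.
rewrite oppr_ge0 ltW //; apply: K'_lt0.
by rewrite inE /= in_itv /= hc_lt andbT mulr_gt0 ?divr_gt0 ?ltr0n ?lt0n.
Qed.

Lemma lattice_weight1 : c < Rk -> lattice_weight 1 = - derive1 K c.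
Proof. by move=> c_lt; rewrite /lattice_weight /lin_coef mul1r c_lt. Qed.

Lemma lin_solution_laplacian_flow x : lin_solution L K Rk Xbar x ->
  laplacian_flow (fun i j => lattice_weight (cyc_dist i j)) x.
Proof.
move=> x_sol i t; have := x_sol i t; congr is_derive.
rewrite /lin_rhs -sumrN; apply: eq_bigr => j _.
rewrite pmod_lattice /lattice_weight; case: eqP => [/cyc_dist_eq0 ->|_].
  by rewrite !subrr !mulr0 oppr0.
by rewrite mulNr.
Qed.

End EquispacedLattice.

Theorem mainTheorem1 (R : realType) (L vd Rk : R) (N : nat) (K : R -> R)
  (Xbar : 'I_N -> R)
  (hL : 0 < L) (hN : (1 <= N)%N) (hvd : 0 < vd)
  (hR0 : 0 < Rk) (hRL : Rk < L)
  (hsupp : forall z : R, z < 0 \/ Rk < z -> K z = 0)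
  (hC1 : {in `]0, Rk[, forall z, derivable K z 1})
  (hC2 : {in `]0, Rk[, forall z, derivable (derive1 K) z 1})
  (hC2c : {in `]0, Rk[, continuous (derive1n 2 K)})
  (hbnd : exists M : R, forall z, z \in `]0, Rk[ ->
            `|K z| <= M /\ `|(derive1n 2 K) z| <= M)
  (hpos : {in `]0, Rk[, forall z, 0 < K z})
  (hdec : {in `]0, Rk[, forall z, (derive1 K) z < 0})
  (hK0 : K 0 = 0) (hKR : K Rk = 0)
  (hK0p : exists2 l : R, 0 < l & K z @[z --> 0^'+] --> l)
  (hlat : forall i j : 'I_N,
     Xbar j - Xbar i = ((j : int) - (i : int))%:~R * (L / N%:R)) :
  let w := vd - \sum_(1 <= h < N) K (h%:R * (L / N%:R)) in
  (forall (i : 'I_N) (t : R),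
     is_derive t 1 (fun s => Xbar i + w * s)
       (ped_rhs L vd K (fun j => Xbar j + w * t) i))
  /\ lin_stable L K Rk Xbar
  /\ (L / N%:R < Rk -> lin_attractive L K Rk Xbar).
Proof.
(* Only [K 0 = 0] and [K' < 0] on [(0, Rk)] are used: the remaining hypotheses
   on [K] matter for the nonlinear system, not for its linearization. *)
case: N Xbar hlat hN => [//|n] Xbar hlat _.
pose a (i j : 'I_n.+1) := lattice_weight n L K Rk (cyc_dist i j).
have a_ge0 i j : 0 <= a i j by exact: lattice_weight_ge0.
have a_balanced k : \sum_i a i k = \sum_j a k j.
  by rewrite /a sum_cyc_dist_l sum_cyc_dist_r.
split; first exact: lattice_translation_solution.
split.
  move=> eps /(laplacian_flow_stable a_ge0 a_balanced) [delta delta_gt0 stable].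
  by exists delta => // x /(lin_solution_laplacian_flow hL hlat); exact: stable.
move=> c_lt_Rk x /(lin_solution_laplacian_flow hL hlat) x_flow.
apply: (laplacian_flow_consensus (al := - derive1 K (L / n.+1%:R)) a_ge0 a_balanced _ _ x_flow).
- by rewrite oppr_gt0 hdec // inE /= in_itv /= c_lt_Rk andbT divr_gt0 ?ltr0n.
- by move=> i i_lt; rewrite /a cyc_dist_succ // lattice_weight1.
Qed.
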